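(* Let $R$ be a local $*$-ring. Then the following are equivalent: (1) $R$ is strongly $J$-$*$-clean. (2) $R$ is strongly $J$-clean. (3) $R$ is uniquely clean. (4) $R/J(R)\cong\mathbb{Z}_2$. (5) $1$ is not the sum of two units in $R$.
   Context: All rings are associative with identity. A $*$-ring is a ring $R$ with an involution $*$, i.e. a map $a\mapsto a^*$ with $(a+b)^*=a^*+b^*$, $(ab)^*=b^*a^*$, $(a^* )^*=a$. A ring is local if it has a unique maximal right ideal. $J(R)$ denotes the Jacobson radical of $R$. A projection is an element $e$ with $e^2=e=e^*$. $R$ is strongly $J$-$*$-clean if every $a\in R$ can be written $a=e+u$ with $e$ a projection, $u\in J(R)$ and $ae=ea$. $R$ is strongly $J$-clean if every $a\in R$ can be written $a=e+u$ with $e$ an idempotent, $u\in J(R)$ and $ae=ea$. $R$ is uniquely clean if every element of $R$ can be written uniquely as the sum of an idempotent and a unit. *)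

From HB Require Import structures.
From mathcomp Require Import all_boot all_algebra.
Set Implicit Arguments. Unset Strict Implicit. Unset Printing Implicit Defensive.
Import GRing.Theory.
Local Open Scope ring_scope.

Definition involution (R : unitRingType) (star : R -> R) : Prop :=
  (forall a b, star (a + b) = star a + star b) /\
  (forall a b, star (a * b) = star b * star a) /\
  (forall a, star (star a) = a).

Definition right_ideal (R : unitRingType) (I : R -> Prop) : Prop :=
  I 0 /\ (forall x y, I x -> I y -> I (x - y)) /\ (forall x r, I x -> I (x * r)).

Definition maximal_right_ideal (R : unitRingType) (I : R -> Prop) : Prop :=
  right_ideal I /\ ~ I 1 /\
  forall K : R -> Prop, right_ideal K -> ~ K 1 ->
    (forall x, I x -> K x) -> forall x, K x -> I x.

Definition local_ring (R : unitRingType) : Prop :=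
  exists M : R -> Prop, maximal_right_ideal M /\
    forall N : R -> Prop, maximal_right_ideal N -> forall x, N x <-> M x.

Definition jacobson (R : unitRingType) (x : R) : Prop :=
  forall M : R -> Prop, maximal_right_ideal M -> M x.

Definition idempotent (R : unitRingType) (e : R) : Prop := e * e = e.
Definition projection (R : unitRingType) (star : R -> R) (e : R) : Prop :=
  e * e = e /\ star e = e.

Definition strongly_J_star_clean (R : unitRingType) (star : R -> R) : Prop :=
  forall a : R, exists e u, projection star e /\ jacobson u /\
    a = e + u /\ a * e = e * a.

Definition strongly_J_clean (R : unitRingType) : Prop :=
  forall a : R, exists e u, idempotent e /\ jacobson u /\
    a = e + u /\ a * e = e * a.

Definition uniquely_clean (R : unitRingType) : Prop :=
  forall a : R, exists e u, idempotent e /\ u \is a GRing.unit /\ a = e + u /\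
    forall e' u', idempotent e' -> u' \is a GRing.unit -> a = e' + u' ->
      e' = e /\ u' = u.

(* R/J(R) is isomorphic to Z_2 : by the first isomorphism theorem, this is
   the existence of a surjective ring morphism R -> Z_2 with kernel J(R). *)
Definition quotient_J_iso_Z2 (R : unitRingType) : Prop :=
  exists f : {rmorphism R -> 'Z_2},
    (forall y : 'Z_2, exists x, f x = y) /\
    (forall x, f x = 0 <-> jacobson x).

Definition one_not_sum_two_units (R : unitRingType) : Prop :=
  ~ exists u v : R, u \is a GRing.unit /\ v \is a GRing.unit /\ 1 = u + v.

(* In a local ring with maximal right ideal M (which is then J(R)), every
   element outside M is a unit and the only idempotents are 0 and 1.  Each of
   the five conditions is therefore equivalent to "every x lies in M or
   1 - x lies in M", i.e. to the residue ring R/M having two elements: the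
   decompositions a = 0 + a and a = 1 + (a - 1) with 0 and 1 projections
   commuting with a give (strong J-(star)-)cleanness, they are the only
   candidates for a clean decomposition, and x, 1 - x both outside M would
   make 1 a sum of two units. *)

From HB Require Import structures.
From mathcomp Require Import all_boot all_algebra.
From mathcomp Require Import boolp classical_sets.
Import GRing.Theory.

Local Open Scope classical_set_scope.
Local Open Scope ring_scope.

Lemma Z2_eq01 (y : 'Z_2) : y = 0 \/ y = 1.
Proof. by case: y => [[|[|//]] ?]; [left | right]; apply: val_inj. Qed.

Lemma Z2_addnn : 1 + 1 = 0 :> 'Z_2.
Proof. exact: val_inj. Qed.

Section Z2Character.
Context {R : pzRingType} (P : R -> Prop).

Definition Z2_kernel : Prop :=
  [/\ ~ P 1, forall x y, P (x + y) <-> (P x <-> P y)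
    & forall x y, P (x * y) <-> P x \/ P y].

Definition Z2_indicator (x : R) : 'Z_2 := if pselect (P x) then 0 else 1.

Lemma Z2_kernel_rmorphism : Z2_kernel ->
  exists f : {rmorphism R -> 'Z_2}, forall x, f x = 0 <-> P x.
Proof.
move=> [P1 PD PM].
have P0 : P 0 by have := PD 0 0; rewrite addr0; tauto.
have fD : Z2_indicator 0 = 0 /\ {morph Z2_indicator : x y / x + y}.
  rewrite /Z2_indicator; split; first by case: pselect.
  move=> x y; have := PD x y.
  by do 3 case: pselect => ? /=; rewrite ?addr0 ?add0r ?Z2_addnn; tauto.
have fM : GRing.monoid_morphism Z2_indicator.
  rewrite /Z2_indicator; split; first by case: pselect.
  move=> x y; have := PM x y.
  by do 3 case: pselect => ? /=; rewrite ?mulr0 ?mul0r ?mulr1; tauto.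
pose fA := GRing.isNmodMorphism.Build R 'Z_2 Z2_indicator fD.
pose fm := GRing.isMonoidMorphism.Build R 'Z_2 Z2_indicator fM.
exists (HB.pack_for {rmorphism R -> 'Z_2} Z2_indicator fA fm) => x /=.
by rewrite /Z2_indicator; case: pselect.
Qed.
End Z2Character.

Section RightIdeal.
Context {R : unitRingType} {I : R -> Prop}.
Hypothesis hI : right_ideal I.

Lemma right_ideal0 : I 0. Proof. by case: hI. Qed.

Lemma right_idealB {x y} : I x -> I y -> I (x - y).
Proof. by case: hI => _ [+ _]; apply. Qed.

Lemma right_idealMr {x} r : I x -> I (x * r).
Proof. by case: hI => _ [_]; apply. Qed.

Lemma right_idealN {x} : I x -> I (- x).
Proof. by rewrite -sub0r; apply/right_idealB/right_ideal0. Qed.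

Lemma right_idealNE {x} : I (- x) <-> I x.
Proof. by split=> [/right_idealN|/right_idealN //]; rewrite opprK. Qed.

Lemma right_idealD {x y} : I x -> I y -> I (x + y).
Proof. by move=> Ix /right_idealN Iy; rewrite -[y]opprK; apply: right_idealB. Qed.

Lemma right_idealDl {x y} : I x -> I (x + y) <-> I y.
Proof.
move=> Ix; split=> [Ixy|]; last exact: right_idealD.
by rewrite -(addKr x y); apply: right_idealD => //; apply: right_idealN.
Qed.

End RightIdeal.

Lemma right_ideal_mulr {R : unitRingType} (x : R) :
  right_ideal (fun z => exists r, z = x * r).
Proof.
split; first by exists 0; rewrite mulr0.
split; first by move=> _ _ [r ->] [s ->]; exists (r - s); rewrite mulrBr.
by move=> _ s [r ->]; exists (r * s); rewrite mulrA.
Qed.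

Lemma right_ideal_maximal_superset {R : unitRingType} {J : R -> Prop} :
  right_ideal J -> ~ J 1 ->
  exists M : R -> Prop, maximal_right_ideal M /\ forall x, J x -> M x.
Proof.
move=> [J0 [JB JM]] J1.
(* The last clause admits the empty set, so that Zorn applies to the empty
   chain, while forcing every nonempty candidate to contain J. *)
pose P (I : set R) := [/\ forall x y, I x -> I y -> I (x - y),
  forall x r, I x -> I (x * r), ~ I 1 & forall z, I z -> J `<=` I].
have [A [[AB AM A1 AJ] Amax]] : exists A, P A /\ forall B, A `<` B -> ~ P B.
  apply: Zorn_bigcup => F FP Ftot; split.
  - move=> x y [X FX Xx] [Y FY Yy].
    have [XY|YX] := Ftot _ _ FX FY.
      by exists Y => //; case: (FP _ FY) => YB _ _ _; apply: YB => //; apply: XY.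
    by exists X => //; case: (FP _ FX) => XB _ _ _; apply: XB => //; apply: YX.
  - by move=> x r [X FX Xx]; exists X => //; case: (FP _ FX) => _ XM _ _; apply: XM.
  - by move=> [X FX X1]; case: (FP _ FX) => _ _ + _; apply.
  - move=> z [X FX Xz] y Jy; exists X => //.
    by case: (FP _ FX) => _ _ _ XJ; exact: XJ Xz _ Jy.
have JA : J `<=` A.
  have [[z Az]|nA] := pselect (exists z, A z); first exact: AJ Az.
  exfalso; apply: (Amax J); last by split=> // z _ y.
  split=> [y Ay|JA]; first by exfalso; apply: nA; exists y.
  by apply: nA; exists 0; apply: JA.
exists A; split=> //; split; first by split; [exact: JA | split].
split=> // K [K0 [KB KM]] K1 AK x Kx.
apply: contrapT => nAx; apply: (Amax K); first by split=> // KA; exact/nAx/KA.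
by split=> // z _ y /JA /AK.
Qed.

Lemma idempotent_unit {R : unitRingType} {e : R} :
  idempotent e -> e \is a GRing.unit -> e = 1.
Proof. by move=> ee ue; apply: (mulrI ue); rewrite mulr1. Qed.

Lemma idempotent_subr {R : unitRingType} {e : R} :
  idempotent e -> idempotent (1 - e).
Proof. by rewrite /idempotent mulrBl mul1r mulrBr mulr1 => ->; rewrite subrr subr0. Qed.

Lemma involution0 {R : unitRingType} {star : R -> R} : involution star -> star 0 = 0.
Proof. by move=> [sD _]; apply: (addrI (star 0)); rewrite -sD !addr0. Qed.

Lemma involution1 {R : unitRingType} {star : R -> R} : involution star -> star 1 = 1.
Proof. by move=> [_ [sM sK]]; have := sM (star 1) 1; rewrite mulr1 sK mulr1. Qed.

Lemma strongly_J_star_clean_J_clean {R : unitRingType} {star : R -> R} :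
  strongly_J_star_clean star -> strongly_J_clean R.
Proof. by move=> hR a; have [e [u [[ee _] rest]]] := hR a; exists e, u. Qed.

Section LocalRing.
Context {R : unitRingType} (M : R -> Prop).
Hypothesis maxM : maximal_right_ideal M.
Hypothesis uniqM : forall {N}, maximal_right_ideal N -> forall x, N x <-> M x.

Let idealM : right_ideal M. Proof. by case: maxM. Qed.
Let M1 : ~ M 1. Proof. by case: maxM => _ []. Qed.

Lemma jacobsonE x : jacobson x <-> M x.
Proof. by split=> [jx | Mx N maxN]; [exact: jx | exact/(uniqM maxN)]. Qed.

Lemma proper_right_ideal_sub {J : R -> Prop} :
  right_ideal J -> ~ J 1 -> forall x, J x -> M x.
Proof.
move=> idJ J1; have [N [maxN JN]] := right_ideal_maximal_superset idJ J1.
by move=> x /JN /(uniqM maxN).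
Qed.

Lemma notM_rinv {x} : ~ M x -> exists y, x * y = 1.
Proof.
move=> nMx; apply: contrapT => nrinv; apply: nMx.
apply: (proper_right_ideal_sub (right_ideal_mulr x)); last by exists 1; rewrite mulr1.
by move=> [y /esym xy]; apply: nrinv; exists y.
Qed.

Lemma unitrE x : x \is a GRing.unit <-> ~ M x.
Proof.
split=> [ux Mx|nMx]; first by apply: M1; rewrite -(mulrV ux); exact: right_idealMr.
have [y xy] := notM_rinv nMx.
have nMy : ~ M y.
  (* Otherwise [1 - y x] has a right inverse w and x = x (1 - y x) w = 0. *)
  move=> My; have nM1yx : ~ M (1 - y * x).
    by move=> /(right_idealDl idealM (right_idealMr idealM x My)); rewrite subrKC.
  have [w yxw] := notM_rinv nM1yx.
  have x0 : x = 0 by rewrite -[x]mulr1 -yxw mulrA mulrBr mulr1 mulrA xy mul1r subrr mul0r.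
  by apply: M1; rewrite -xy x0 mul0r; exact: right_ideal0.
have [z yz] := notM_rinv nMy.
have xz : x = z by rewrite -[x]mulr1 -yz mulrA xy mul1r.
by apply/unitrP; exists y; rewrite {1}xz.
Qed.

Lemma idempotent_local {e : R} : idempotent e -> e = 0 \/ e = 1.
Proof.
move=> ee; have [Me|nMe] := pselect (M e); last by right; apply/idempotent_unit/unitrE.
left; have u1e : 1 - e \is a GRing.unit.
  by apply/unitrE => /(right_idealDl idealM Me); rewrite subrKC.
by have := idempotent_unit (idempotent_subr ee) u1e; rewrite -{2}[1]subr0 => /addrI /oppr_inj.
Qed.

Definition residue_F2 := forall x, M x \/ M (1 - x).

Lemma residue_F2_J_star_clean {star : R -> R} :
  involution star -> residue_F2 -> strongly_J_star_clean star.
Proof.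
move=> invs hM a; have [Ma|M1a] := hM a.
  exists 0, a; split; first by split; [exact: mulr0 | exact: involution0].
  by rewrite add0r mulr0 mul0r; split; first exact/jacobsonE.
exists 1, (a - 1); split; first by split; [exact: mulr1 | exact: involution1].
rewrite subrKC mulr1 mul1r; split=> //.
by apply/jacobsonE; rewrite -opprB; exact: right_idealN.
Qed.

Lemma J_clean_residue_F2 : strongly_J_clean R -> residue_F2.
Proof.
move=> hR x; have [e [u [ee [/jacobsonE Mu [-> _]]]]] := hR x.
have [->|->] := idempotent_local ee; first by left; rewrite add0r.
by right; rewrite opprD addrA subrr sub0r; exact: right_idealN.
Qed.

Lemma M_mul x y : M (x * y) <-> M x \/ M y.
Proof.
split=> [Mxy|[Mx|My]]; last 2 first.
- exact: right_idealMr.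
- apply: contrapT => /unitrE uxy.
  have [Mx|/unitrE ux] := pselect (M x).
    by move/unitrE: uxy; apply; exact: right_idealMr.
  by move: uxy; rewrite unitrMr // => /unitrE.
apply: contrapT => /not_orP[/unitrE ux /unitrE uy].
by move: Mxy; apply/unitrE; rewrite unitrMl.
Qed.

Lemma one_not_sum_two_unitsE : one_not_sum_two_units R <-> residue_F2.
Proof.
split=> [h2 x|hM [u [v [/unitrE nMu [/unitrE nMv uv]]]]].
  apply: contrapT => /not_orP[nMx nM1x]; apply: h2.
  by exists x, (1 - x); rewrite subrKC; split; [exact/unitrE | split; first exact/unitrE].
by have [//|] := hM u; rewrite uv [u + v]addrC addrK.
Qed.

Lemma uniquely_cleanE : uniquely_clean R <-> residue_F2.
Proof.
split=> [hR x|hM a].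
  apply: contrapT => /not_orP[/unitrE ux nM1x].
  have ux1 : x - 1 \is a GRing.unit by rewrite -opprB unitrN; exact/unitrE.
  have [e [u [_ [_ [_ uniq]]]]] := hR x.
  have [e0 _] := uniq 0 x (mulr0 0) ux (esym (add0r x)).
  have [e1 _] := uniq 1 (x - 1) (mulr1 1) ux1 (esym (subrKC 1 x)).
  by move: (oner_neq0 R); rewrite e1 -e0 eqxx.
have [Ma|M1a] := hM a.
  have ua1 : a - 1 \is a GRing.unit.
    by apply/unitrE => Ma1; apply: M1; rewrite -(subKr a 1); exact: right_idealB.
  exists 1, (a - 1); split; first exact: mulr1.
  split=> //; split; first by rewrite subrKC.
  move=> e u ee uu aE; subst a; have [e0|e1] := idempotent_local ee; subst e.
    by move/unitrE: uu; rewrite add0r in Ma.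
  by rewrite [1 + u]addrC addrK.
have ua : a \is a GRing.unit.
  by apply/unitrE => Ma; apply: M1; rewrite -(subrKC a 1); exact: right_idealD.
exists 0, a; split; first exact: mulr0.
split=> //; split; first by rewrite add0r.
move=> e u ee uu aE; subst a; have [e0|e1] := idempotent_local ee; subst e.
  by rewrite add0r.
exfalso; move/unitrE: uu; apply; apply/(right_idealNE idealM).
by move: M1a; rewrite opprD addrA subrr add0r.
Qed.

Lemma residue_F2_kernel : residue_F2 -> Z2_kernel M.
Proof.
move=> hM; split=> [|x y|x y]; [exact: M1 | | exact: M_mul].
have [Mx|nMx] := pselect (M x).
  by have := right_idealDl idealM Mx (y := y); tauto.
have [My|nMy] := pselect (M y).
  by have := right_idealDl idealM My (y := x); rewrite addrC; tauto.
suff: M (x + y) by tauto.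
have M1x : M (1 - x) by case: (hM x).
have M1y : M (1 + y) by case: (hM (- y)) => [/(right_idealNE idealM) //|]; rewrite opprK.
by have := right_idealB idealM M1y M1x; rewrite opprB addrC addrA subrK.
Qed.

Lemma quotient_J_iso_Z2E : quotient_J_iso_Z2 R <-> residue_F2.
Proof.
split=> [[f [_ kerf]] x|hM].
  have [fx0|fx1] := Z2_eq01 (f x); first by left; apply/jacobsonE/kerf.
  by right; apply/jacobsonE/kerf; rewrite rmorphB rmorph1 fx1 subrr.
have [f kerf] := Z2_kernel_rmorphism M (residue_F2_kernel hM).
exists f; split=> [y|x]; last exact: iff_trans (kerf x) (iff_sym (jacobsonE x)).
by have [->|->] := Z2_eq01 y; [exists 0; exact: rmorph0 | exists 1; exact: rmorph1].
Qed.

End LocalRing.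

Theorem corollary2p8 (R : unitRingType) (star : R -> R) :
  involution star -> local_ring R ->
  (strongly_J_star_clean star <-> strongly_J_clean R) /\
  (strongly_J_clean R <-> uniquely_clean R) /\
  (uniquely_clean R <-> quotient_J_iso_Z2 R) /\
  (quotient_J_iso_Z2 R <-> one_not_sum_two_units R).
Proof.
move=> invs [M [maxM uniqM]].
have starE : strongly_J_star_clean star <-> residue_F2 M.
  split=> [/strongly_J_star_clean_J_clean|]; first exact: J_clean_residue_F2.
  exact: residue_F2_J_star_clean.
have JcleanE : strongly_J_clean R <-> residue_F2 M.
  split; first exact: J_clean_residue_F2.
  by move/(residue_F2_J_star_clean M maxM uniqM invs)/strongly_J_star_clean_J_clean.
have := uniquely_cleanE M maxM uniqM; have := quotient_J_iso_Z2E M maxM uniqM.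
have := one_not_sum_two_unitsE M maxM uniqM; tauto.
Qed.
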